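(* Let $g>0$, $\gamma>0$, $a\in(0,\nu_1)$, and let $\hat\nu:\mathbb R\to[\nu_0,\nu_1]$ be a stretch-limiting constitutive function as in the context. Let $(\lambda,\mu)$ with $\lambda>0$ be the unique solution of $$a\mathbf i+0\,\mathbf k=\int_0^1\frac{\hat\nu(\delta(s))}{\delta(s)}\big(\lambda\mathbf i+(\mu+g\gamma s)\mathbf k\big)\,ds,\qquad \delta(s)=\sqrt{\lambda^2+(\mu+g\gamma s)^2}$$ (the tensile uniform catenary with supports at $\mathbf 0$ and $a\mathbf i$, with tension $N(s)=\delta(s)$). Then the catenary is inextensible, i.e. $\delta(s)\ge N_1$ for all $s\in[0,1]$ (equivalently stretch $\nu\equiv\nu_1$), if and only if $$\nu_1\frac{2N_1}{g\gamma}\sinh^{-1}\frac{g\gamma}{2N_1}\le a<\nu_1.$$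
   Context: Stretch-limited constitutive function: constants $N_0<0<N_1$, $0<\nu_0<1<\nu_1$ with $\hat\nu(N)=\nu_0$ for $N\le N_0$, $\hat\nu(N)=\nu_1$ for $N\ge N_1$, $\hat\nu\in C^\infty([N_0,N_1];[\nu_0,\nu_1])$, $\hat\nu(0)=1$, $\hat\nu'\ge c>0$ on $[N_0,N_1]$. The string is uniform with mass $\gamma$ per unit reference length, parametrized by $s\in[0,1]$, with $\mathbf r(0)=\mathbf 0$, $\mathbf r(1)=a\mathbf i$, contact force $\mathbf n(s)=\lambda\mathbf i+(\mu+g\gamma s)\mathbf k$, and stretch $|\mathbf r_s|=\hat\nu(N)$. It is a known fact (existence and uniqueness of tensile states) that for $a>0$, $a^2<\nu_1^2$ there is exactly one solution $(\lambda,\mu)$ of the displayed equation with $\lambda>0$; for it one has $\mu=-g\gamma/2$. *)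

From Stdlib Require Import Reals.
From Coquelicot Require Import Coquelicot.
Open Scope R_scope.

Definition arsinh (x : R) : R := ln (x + sqrt (x ^ 2 + 1)).

(* Stretch-limited constitutive function as in the context.
   C^infinity on [N0,N1] is rendered as: the restriction to [N0,N1] of a
   function smooth on all of R. *)
Definition stretch_limited (nu : R -> R) (N0 N1 nu0 nu1 c : R) : Prop :=
  N0 < 0 < N1 /\ 0 < nu0 < 1 /\ 1 < nu1 /\ 0 < c /\
  (forall N, N <= N0 -> nu N = nu0) /\
  (forall N, N1 <= N -> nu N = nu1) /\
  (forall N, N0 <= N <= N1 -> nu0 <= nu N <= nu1) /\
  nu 0 = 1 /\
  (exists phi : R -> R,
      (forall n x, ex_derive_n phi n x) /\
      (forall N, N0 <= N <= N1 -> nu N = phi N) /\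
      (forall N, N0 <= N <= N1 -> c <= Derive phi N)).

Definition tension (g gam lam mu s : R) : R :=
  sqrt (lam ^ 2 + (mu + g * gam * s) ^ 2).

From Stdlib Require Import Reals Lra Psatz.
From Coquelicot Require Import Coquelicot.
Open Scope R_scope.

(* If the tension stays above N1 the stretch is constantly nu1, so both load integrals are
   elementary: the vertical one gives T(1) = T(0), i.e. mu = -g gam / 2, the tension is
   smallest (equal to lam) at the midpoint, and a = nu1 F(g gam / (2 lam)) with
   F x = arsinh x / x decreasing; lam >= N1 then yields the bound.  Conversely, if the
   tension drops below N1 somewhere then lam < N1, and nu <= nu1 together with the fact that
   arsinh-increments of fixed length are largest when centred give
   a <= nu1 F(g gam / (2 lam)) < nu1 F(g gam / (2 N1)). *)

Lemma sinh_opp x : sinh (- x) = - sinh x.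
Proof. unfold sinh; rewrite Ropp_involutive; lra. Qed.

Lemma arcsinh_opp x : arcsinh (- x) = - arcsinh x.
Proof.
  rewrite <- (sinh_arcsinh x) at 1.
  rewrite <- sinh_opp.
  apply arcsinh_sinh.
Qed.

Lemma cosh_ge_1 x : 1 <= cosh x.
Proof.
  unfold cosh; rewrite exp_Ropp.
  assert (Hx := exp_pos x).
  assert (Hsq : 0 <= (exp x - 1) ^ 2 / exp x).
  { apply Rmult_le_pos; [apply pow2_ge_0 | left; apply Rinv_0_lt_compat; lra]. }
  replace ((exp x - 1) ^ 2 / exp x) with (exp x + / exp x - 2) in Hsq by (field; lra).
  lra.
Qed.

Lemma sinh_ge_0 x : 0 <= x -> 0 <= sinh x.
Proof.
  intros [Hx | <-]; [| rewrite sinh_0; lra].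
  rewrite <- sinh_0; left; apply sinh_lt, Hx.
Qed.

Lemma sinh_sub x y : sinh x - sinh y = 2 * cosh ((x + y) / 2) * sinh ((x - y) / 2).
Proof.
  unfold sinh, cosh.
  assert (Hx : exp x = exp ((x + y) / 2) * exp ((x - y) / 2))
    by (rewrite <- exp_plus; f_equal; field).
  assert (Hy : exp y = exp ((x + y) / 2) / exp ((x - y) / 2))
    by (unfold Rdiv; rewrite <- exp_Ropp, <- exp_plus; f_equal; field).
  assert (HP := exp_pos ((x + y) / 2)); assert (HQ := exp_pos ((x - y) / 2)).
  rewrite !exp_Ropp, Hx, Hy; field; lra.
Qed.

(* The right-hand side is the increment over the centred interval [-K/2, K/2]. *)
Lemma arcsinh_increment_le u K : 0 <= K ->
  arcsinh (u + K) - arcsinh u <= 2 * arcsinh (K / 2).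
Proof.
  intros HK.
  set (A := arcsinh (u + K)); set (B := arcsinh u).
  assert (HBA : B <= A) by (apply arcsinh_le; lra).
  assert (HK' : sinh A - sinh B = K) by (unfold A, B; rewrite !sinh_arcsinh; lra).
  rewrite sinh_sub in HK'.
  assert (Hc := cosh_ge_1 ((A + B) / 2)).
  assert (Hs := sinh_ge_0 ((A - B) / 2) ltac:(lra)).
  assert (Hhalf : sinh ((A - B) / 2) <= K / 2) by nra.
  apply arcsinh_le in Hhalf; rewrite arcsinh_sinh in Hhalf.
  lra.
Qed.

Lemma sqrt_sqr_plus_1_pos x : 0 < sqrt (x ^ 2 + 1).
Proof. apply sqrt_lt_R0; nra. Qed.

Lemma is_derive_arcsinh x : is_derive arcsinh x (/ sqrt (x ^ 2 + 1)).
Proof. apply is_derive_Reals, derivable_pt_lim_arcsinh. Qed.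

Lemma div_sqrt_lt_arcsinh x : 0 < x -> x / sqrt (x ^ 2 + 1) < arcsinh x.
Proof.
  intros Hx.
  destruct (MVT_cor2 (fun t => arcsinh t - t / sqrt (t ^ 2 + 1))
     (fun t => t ^ 2 / (sqrt (t ^ 2 + 1) * (t ^ 2 + 1))) 0 x Hx) as [c [Hc Hc0x]].
  { intros c _; apply is_derive_Reals.
    assert (Hs := sqrt_sqr_plus_1_pos c).
    assert (Hss : sqrt (c ^ 2 + 1) * sqrt (c ^ 2 + 1) = c ^ 2 + 1) by (apply sqrt_sqrt; nra).
    replace (c ^ 2 / (sqrt (c ^ 2 + 1) * (c ^ 2 + 1)))
      with (/ sqrt (c ^ 2 + 1) - / (sqrt (c ^ 2 + 1) * (c ^ 2 + 1))) by (field; nra).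
    apply (is_derive_minus arcsinh (fun t => t / sqrt (t ^ 2 + 1))).
    - apply is_derive_arcsinh.
    - auto_derive.
      + replace (c * (c * 1) + 1) with (c ^ 2 + 1) by ring; nra.
      + replace (c * (c * 1) + 1) with (c ^ 2 + 1) by ring.
        rewrite Hss; field; nra. }
  rewrite arcsinh_0 in Hc.
  replace (0 / sqrt (0 ^ 2 + 1)) with 0 in Hc by (unfold Rdiv; ring).
  assert (Hs := sqrt_sqr_plus_1_pos c).
  assert (0 < c ^ 2 / (sqrt (c ^ 2 + 1) * (c ^ 2 + 1)))
    by (apply Rdiv_lt_0_compat; [nra | apply Rmult_lt_0_compat; nra]).
  nra.
Qed.

Lemma arcsinh_div_decreasing x y : 0 < x -> x < y -> arcsinh y / y < arcsinh x / x.
Proof.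
  intros Hx Hxy.
  destruct (MVT_cor2 (fun t => arcsinh t / t)
     (fun t => (/ sqrt (t ^ 2 + 1) * t - arcsinh t * 1) / t ^ 2) x y Hxy)
    as [c [Hc Hcxy]].
  { intros c Hc; apply is_derive_Reals, is_derive_div.
    - apply is_derive_arcsinh.
    - apply (is_derive_id (K := R_AbsRing)).
    - lra. }
  assert (Hc0 : 0 < c) by lra.
  assert (Hlt := div_sqrt_lt_arcsinh c Hc0).
  assert ((/ sqrt (c ^ 2 + 1) * c - arcsinh c * 1) / c ^ 2 < 0).
  { apply Rlt_div_l; [nra |].
    replace (/ sqrt (c ^ 2 + 1) * c) with (c / sqrt (c ^ 2 + 1)) by (unfold Rdiv; ring).
    lra. }
  nra.
Qed.

Lemma arcsinh_div_antitone x y : 0 < x -> x <= y -> arcsinh y / y <= arcsinh x / x.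
Proof.
  intros Hx [Hxy | <-]; [left; apply arcsinh_div_decreasing |]; lra.
Qed.

Lemma hypot_sq_pos lam h : 0 < lam -> 0 < lam ^ 2 + h ^ 2.
Proof. intros; nra. Qed.

Lemma sqrt_hypot_pos lam h : 0 < lam -> 0 < sqrt (lam ^ 2 + h ^ 2).
Proof. intros; apply sqrt_lt_R0, hypot_sq_pos; assumption. Qed.

Lemma sqrt_hypot_ge lam h : 0 < lam -> lam <= sqrt (lam ^ 2 + h ^ 2).
Proof.
  intros; rewrite <- (sqrt_pow2 lam) at 1 by lra.
  apply sqrt_le_1_alt; nra.
Qed.

Lemma sqrt_hypot_scale lam h : 0 < lam ->
  sqrt (lam ^ 2 + h ^ 2) = lam * sqrt ((h / lam) ^ 2 + 1).
Proof.
  intros Hlam.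
  replace (lam ^ 2 + h ^ 2) with (lam ^ 2 * ((h / lam) ^ 2 + 1)) by (field; lra).
  rewrite sqrt_mult_alt, sqrt_pow2; nra.
Qed.

Section AffineHypotIntegrals.

Variables lam mu k : R.
Hypotheses (lam_gt0 : 0 < lam) (k_neq0 : k <> 0).

Lemma continuous_div_hypot (f : R -> R) (x : R) :
  (forall s, ex_derive f s) -> continuous (fun s => f s / sqrt (lam ^ 2 + (mu + k * s) ^ 2)) x.
Proof.
  intros Hf.
  apply (ex_derive_continuous (fun s => f s / sqrt (lam ^ 2 + (mu + k * s) ^ 2))).
  assert (Hsq := hypot_sq_pos lam (mu + k * x) lam_gt0).
  assert (Hpos := sqrt_hypot_pos lam (mu + k * x) lam_gt0).
  auto_derive.
  replace (lam * (lam * 1) + _) with (lam ^ 2 + (mu + k * x) ^ 2) by ring.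
  repeat split; [apply Hf | lra | lra].
Qed.

Lemma is_RInt_div_hypot u v :
  is_RInt (fun s => lam / sqrt (lam ^ 2 + (mu + k * s) ^ 2)) u v
    (lam / k * (arcsinh ((mu + k * v) / lam) - arcsinh ((mu + k * u) / lam))).
Proof.
  set (F := fun s => lam / k * arcsinh ((mu + k * s) / lam)).
  replace (lam / k * _) with (minus (F v) (F u))
    by (unfold F, minus, plus, opp; simpl; ring).
  apply (is_RInt_derive (V := R_CompleteNormedModule)); intros x _.
  - assert (Hin : is_derive (fun s => (mu + k * s) / lam) x (k / lam))
      by (auto_derive; [lra | field; lra]).
    assert (Hout := is_derive_arcsinh ((mu + k * x) / lam)).
    assert (HF := is_derive_scal _ _ (lam / k) _ (is_derive_comp _ _ x _ _ Hout Hin)).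
    replace (lam / sqrt (lam ^ 2 + (mu + k * x) ^ 2))
      with (lam / k * scal (k / lam) (/ sqrt (((mu + k * x) / lam) ^ 2 + 1))); [exact HF |].
    rewrite sqrt_hypot_scale by exact lam_gt0.
    assert (Hs := sqrt_sqr_plus_1_pos ((mu + k * x) / lam)).
    change (scal (k / lam) ?y) with (k / lam * y); field; repeat split; lra.
  - apply (continuous_div_hypot (fun _ => lam)); intros; auto_derive; exact I.
Qed.

Lemma is_RInt_affine_div_hypot u v :
  is_RInt (fun s => (mu + k * s) / sqrt (lam ^ 2 + (mu + k * s) ^ 2)) u v
    ((sqrt (lam ^ 2 + (mu + k * v) ^ 2) - sqrt (lam ^ 2 + (mu + k * u) ^ 2)) / k).
Proof.
  set (F := fun s => sqrt (lam ^ 2 + (mu + k * s) ^ 2) / k).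
  replace (_ / k) with (minus (F v) (F u))
    by (unfold F, minus, plus, opp; simpl; field; exact k_neq0).
  apply (is_RInt_derive (V := R_CompleteNormedModule)); intros x _.
  - assert (Hsq := hypot_sq_pos lam (mu + k * x) lam_gt0).
    assert (Hpos := sqrt_hypot_pos lam (mu + k * x) lam_gt0).
    unfold F; auto_derive;
      replace (lam * (lam * 1) + _) with (lam ^ 2 + (mu + k * x) ^ 2) by ring;
      [lra | field; lra].
  - apply (continuous_div_hypot (fun s => mu + k * s)); intros; auto_derive; exact I.
Qed.

End AffineHypotIntegrals.

Lemma is_RInt_ext_eq (f g : R -> R) a b If Ig : a <= b ->
  (forall x, a < x < b -> f x = g x) -> is_RInt f a b If -> is_RInt g a b Ig -> If = Ig.
Proof.
  intros Hab Hfg Hf Hg.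
  apply Rle_antisym; [apply (is_RInt_le f g a b) | apply (is_RInt_le g f a b)];
    try assumption; intros x Hx; rewrite Hfg by exact Hx; lra.
Qed.

Lemma is_RInt_mult_l (f : R -> R) a b If c :
  is_RInt f a b If -> is_RInt (fun s => c * f s) a b (c * If).
Proof. exact (is_RInt_scal f a b c If). Qed.

Lemma arcsinh_span_le lam mu k : 0 < lam -> 0 < k ->
  lam / k * (arcsinh ((mu + k) / lam) - arcsinh (mu / lam))
    <= arcsinh (k / (2 * lam)) / (k / (2 * lam)).
Proof.
  intros Hlam Hk.
  assert (Hinc := arcsinh_increment_le (mu / lam) (k / lam)
                    ltac:(apply Rlt_le, Rdiv_lt_0_compat; lra)).
  replace (mu / lam + k / lam) with ((mu + k) / lam) in Hinc by (field; lra).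
  replace (k / lam / 2) with (k / (2 * lam)) in Hinc by (field; lra).
  replace (arcsinh (k / (2 * lam)) / (k / (2 * lam)))
    with (lam / k * (2 * arcsinh (k / (2 * lam)))) by (field; lra).
  apply Rmult_le_compat_l; [apply Rlt_le, Rdiv_lt_0_compat |]; lra.
Qed.

Lemma arcsinh_span_centred lam k : 0 < lam -> 0 < k ->
  lam / k * (arcsinh ((- k / 2 + k) / lam) - arcsinh (- k / 2 / lam))
    = arcsinh (k / (2 * lam)) / (k / (2 * lam)).
Proof.
  intros Hlam Hk.
  replace ((- k / 2 + k) / lam) with (k / (2 * lam)) by (field; lra).
  replace (- k / 2 / lam) with (- (k / (2 * lam))) by (field; lra).
  rewrite arcsinh_opp; field; lra.
Qed.

Lemma stretch_limited_bounds nu N0 N1 nu0 nu1 c :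
  stretch_limited nu N0 N1 nu0 nu1 c ->
  0 < N1 /\ 0 < nu1 /\ (forall N, nu N <= nu1) /\ (forall N, N1 <= N -> nu N = nu1).
Proof.
  intros (HN & Hnu0 & Hnu1 & _ & Hlow & Htop & Hmid & _).
  repeat split; try lra; [| exact Htop].
  intros N.
  destruct (Rle_dec N N0); [rewrite Hlow; lra |].
  destruct (Rle_dec N1 N); [rewrite Htop; lra |].
  apply Hmid; lra.
Qed.

Section Catenary.

Variables (nu : R -> R) (N1 nu1 g gam lam mu a : R).
Hypotheses (N1_gt0 : 0 < N1) (nu1_gt0 : 0 < nu1) (load_gt0 : 0 < g * gam) (lam_gt0 : 0 < lam).
Hypotheses (nu_le : forall N, nu N <= nu1) (nu_top : forall N, N1 <= N -> nu N = nu1).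
Hypothesis span :
  is_RInt (fun s => nu (tension g gam lam mu s) / tension g gam lam mu s * lam) 0 1 a.
Hypothesis balance :
  is_RInt (fun s => nu (tension g gam lam mu s) / tension g gam lam mu s
                    * (mu + g * gam * s)) 0 1 0.

Lemma tension_pos s : 0 < tension g gam lam mu s.
Proof. apply sqrt_hypot_pos, lam_gt0. Qed.

Lemma span_le_arcsinh_ratio :
  a <= nu1 * (arcsinh (g * gam / (2 * lam)) / (g * gam / (2 * lam))).
Proof.
  assert (Hint := is_RInt_mult_l _ _ _ _ nu1
                    (is_RInt_div_hypot lam mu (g * gam) lam_gt0 ltac:(lra) 0 1)).
  rewrite Rmult_1_r, Rmult_0_r, Rplus_0_r in Hint.
  eapply Rle_trans; [apply (is_RInt_le _ _ 0 1 _ _ ltac:(lra) span Hint) |].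
  2: apply Rmult_le_compat_l; [lra | apply arcsinh_span_le; assumption].
  intros s _.
  assert (HT := tension_pos s); assert (Hnu := nu_le (tension g gam lam mu s)).
  unfold tension in *.
  replace (nu1 * (lam / _)) with (nu1 / sqrt (lam ^ 2 + (mu + g * gam * s) ^ 2) * lam)
    by (field; lra).
  apply Rmult_le_compat_r; [lra |].
  apply Rmult_le_compat_r; [left; apply Rinv_0_lt_compat |]; lra.
Qed.

Section Inextensible.

Hypothesis inextensible : forall s, 0 <= s <= 1 -> N1 <= tension g gam lam mu s.

Lemma inextensible_integrand (f : R -> R) s : 0 < s < 1 ->
  nu (tension g gam lam mu s) / tension g gam lam mu s * f s
    = nu1 * (f s / tension g gam lam mu s).
Proof.
  intros Hs; assert (HT := tension_pos s).
  rewrite nu_top by (apply inextensible; lra).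
  field; lra.
Qed.

(* With constant stretch the vertical balance integrates to T(1) = T(0). *)
Lemma inextensible_centred : mu = - (g * gam) / 2.
Proof.
  assert (Hint := is_RInt_mult_l _ _ _ _ nu1
                    (is_RInt_affine_div_hypot lam mu (g * gam) lam_gt0 ltac:(lra) 0 1)).
  assert (E := is_RInt_ext_eq _ _ 0 1 _ _ ltac:(lra)
                 (fun s Hs => inextensible_integrand (fun s => mu + g * gam * s) s Hs)
                 balance Hint).
  rewrite Rmult_1_r, Rmult_0_r, Rplus_0_r in E.
  assert (Hsq : sqrt (lam ^ 2 + (mu + g * gam) ^ 2) = sqrt (lam ^ 2 + mu ^ 2)).
  { apply Rminus_diag_uniq.
    apply (Rmult_eq_reg_l (nu1 / (g * gam))); [| apply Rgt_not_eq, Rdiv_lt_0_compat; lra].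
    rewrite Rmult_0_r, E; unfold Rdiv; ring. }
  apply sqrt_inj in Hsq; [| apply Rlt_le, hypot_sq_pos, lam_gt0 ..].
  assert (Hk : g * gam * (2 * mu + g * gam) = 0) by (rewrite <- (Rminus_diag_eq _ _ Hsq); ring).
  apply Rmult_integral in Hk; destruct Hk; lra.
Qed.

Lemma inextensible_span :
  a = nu1 * (arcsinh (g * gam / (2 * lam)) / (g * gam / (2 * lam))).
Proof.
  assert (Hint := is_RInt_mult_l _ _ _ _ nu1
                    (is_RInt_div_hypot lam mu (g * gam) lam_gt0 ltac:(lra) 0 1)).
  rewrite Rmult_1_r, Rmult_0_r, Rplus_0_r in Hint.
  rewrite (is_RInt_ext_eq _ _ 0 1 _ _ ltac:(lra)
             (fun s Hs => inextensible_integrand (fun _ => lam) s Hs) span Hint).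
  rewrite inextensible_centred, arcsinh_span_centred by lra.
  reflexivity.
Qed.

Lemma inextensible_lam_ge : N1 <= lam.
Proof.
  assert (Hmid := inextensible (1 / 2) ltac:(lra)).
  unfold tension in Hmid; rewrite inextensible_centred in Hmid.
  replace (lam ^ 2 + _) with (lam ^ 2) in Hmid by field.
  rewrite sqrt_pow2 in Hmid; lra.
Qed.

End Inextensible.

Lemma inextensible_span_ge :
  (forall s, 0 <= s <= 1 -> N1 <= tension g gam lam mu s) ->
  nu1 * (arcsinh (g * gam / (2 * N1)) / (g * gam / (2 * N1))) <= a.
Proof.
  intros Hall.
  rewrite (inextensible_span Hall).
  assert (HN1 := inextensible_lam_ge Hall).
  apply Rmult_le_compat_l; [lra |].
  apply arcsinh_div_antitone; [apply Rdiv_lt_0_compat; lra |].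
  unfold Rdiv; apply Rmult_le_compat_l; [lra |].
  apply Rinv_le_contravar; lra.
Qed.

Lemma extensible_span_lt s : tension g gam lam mu s < N1 ->
  a < nu1 * (arcsinh (g * gam / (2 * N1)) / (g * gam / (2 * N1))).
Proof.
  intros Hs.
  assert (Hlam : lam < N1) by (apply Rle_lt_trans with (2 := Hs), sqrt_hypot_ge, lam_gt0).
  apply Rle_lt_trans with (1 := span_le_arcsinh_ratio).
  apply Rmult_lt_compat_l; [lra |].
  apply arcsinh_div_decreasing; [apply Rdiv_lt_0_compat; lra |].
  unfold Rdiv; apply Rmult_lt_compat_l; [lra |].
  apply Rinv_lt_contravar; nra.
Qed.

End Catenary.

Theorem proposition4p2
  (nu : R -> R) (N0 N1 nu0 nu1 c g gam a lam mu : R) :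
  stretch_limited nu N0 N1 nu0 nu1 c ->
  0 < g -> 0 < gam -> 0 < a < nu1 ->
  0 < lam ->
  is_RInt (fun s => nu (tension g gam lam mu s) / tension g gam lam mu s * lam)
    0 1 a ->
  is_RInt (fun s => nu (tension g gam lam mu s) / tension g gam lam mu s
                    * (mu + g * gam * s))
    0 1 0 ->
  ((forall s, 0 <= s <= 1 -> N1 <= tension g gam lam mu s) <->
   (nu1 * (2 * N1 / (g * gam)) * arsinh (g * gam / (2 * N1)) <= a /\ a < nu1)).
Proof.
  intros Hnu Hg Hgam Ha Hlam Hspan Hbalance.
  assert (Hk : 0 < g * gam) by (apply Rmult_lt_0_compat; assumption).
  destruct (stretch_limited_bounds nu N0 N1 nu0 nu1 c Hnu) as (HN1 & Hnu1 & Hle & Htop).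
  replace (nu1 * (2 * N1 / (g * gam)) * arsinh (g * gam / (2 * N1)))
    with (nu1 * (arcsinh (g * gam / (2 * N1)) / (g * gam / (2 * N1))))
    by (change arsinh with arcsinh; field; repeat split; lra).
  split.
  - intros Hall; split; [| apply Ha].
    now apply (inextensible_span_ge nu N1 nu1 g gam lam mu a).
  - intros [Hbound _] s _.
    apply Rnot_lt_le; intros Hlt.
    assert (Hspan_lt : a < nu1 * (arcsinh (g * gam / (2 * N1)) / (g * gam / (2 * N1))))
      by now apply (extensible_span_lt nu N1 nu1 g gam lam mu a) with s.
    lra.
Qed.
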